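(* If $G$ is a finitely generated profinite group and $H<G$ is a subgroup of finite index, then every epimorphism $\alpha: G\to H$ has finite kernel; in particular, if $G$ has no non-trivial finite normal subgroup then $\alpha$ is injective.
   Context: Finitely generated means topologically finitely generated. Epimorphism means a surjective (continuous) homomorphism. *)

From HB Require Import structures.
From mathcomp Require Import all_boot all_order all_algebra.
From mathcomp Require Import all_classical all_reals all_analysis.
Set Implicit Arguments. Unset Strict Implicit. Unset Printing Implicit Defensive.
Local Open Scope classical_set_scope.

Section TopGroupDefs.
Variable G : topologicalType.
Variables (mul : G -> G -> G) (inv : G -> G) (one : G).

Definition is_group : Prop :=
  [/\ forall x y z, mul x (mul y z) = mul (mul x y) z,
      forall x, mul one x = x, forall x, mul x one = x,
      forall x, mul (inv x) x = one & forall x, mul x (inv x) = one].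

Definition is_topological_group : Prop :=
  [/\ is_group,
      continuous (fun p : G * G => mul p.1 p.2) & continuous inv].

Definition is_profinite_group : Prop :=
  [/\ is_topological_group, compact [set: G], hausdorff_space G
    & totally_disconnected [set: G]].

Definition is_subgroup (H : set G) : Prop :=
  [/\ H one, forall x y, H x -> H y -> H (mul x y) & forall x, H x -> H (inv x)].

Definition is_normal_subgroup (N : set G) : Prop :=
  is_subgroup N /\ forall g x, N x -> N (mul (mul g x) (inv g)).

Definition generated_subgroup (S : set G) : set G :=
  \bigcap_(K in [set K | is_subgroup K /\ S `<=` K]) K.

Definition topologically_finitely_generated : Prop :=
  exists S : set G, finite_set S /\ closure (generated_subgroup S) = [set: G].

Definition lcoset (g : G) (H : set G) : set G := [set mul g h | h in H].

Definition finite_index (H : set G) : Prop :=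
  finite_set [set lcoset g H | g in [set: G]].

Definition is_hom (f : G -> G) : Prop := forall x y, f (mul x y) = mul (f x) (f y).

(* epimorphism G -> H: continuous surjective homomorphism onto H (as a map into
   G with image exactly H; continuity into the subspace H is the same as
   continuity into G for a map with values in H) *)
Definition is_epimorphism_onto (f : G -> G) (H : set G) : Prop :=
  [/\ is_hom f, continuous f & f @` [set: G] = H].

Definition hom_kernel (f : G -> G) : set G := [set x | f x = one].

Definition no_nontrivial_finite_normal_subgroup : Prop :=
  forall N : set G, is_normal_subgroup N -> finite_set N -> N = [set one].

End TopGroupDefs.

From HB Require Import structures.
From mathcomp Require Import all_boot all_order all_algebra.
From mathcomp Require Import all_classical all_reals all_analysis.
Set Implicit Arguments. Unset Strict Implicit. Unset Printing Implicit Defensive.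

(* Let d be the index of H.  Suppose k_0, ..., k_d are distinct
   elements of ker alpha.  Profinite groups have enough open normal subgroups
   to separate finitely many points, so some open normal M puts the k_l in
   distinct cosets.  Finite generation and continuity give an open subgroup
   N <= M with alpha N <= N (two iterates of alpha agree modulo M on the
   generators, hence everywhere).  Then alpha induces F on the finite set G/N;
   every fibre of F has >= d+1 elements (the classes of x k_l), while G/N is
   covered by the d translates c.(im F), c ranging over coset representatives
   of H = alpha(G).  Counting gives |G/N| = 0, a contradiction. *)

Lemma fun_nat_repeats (T : finType) (f : nat -> T) :
  exists i j, (i < j)%N /\ f i = f j.
Proof.
have /injectivePn [i [j /eqP neq_ij eq_f]] :
    ~~ injectiveb (fun i : 'I_#|T|.+1 => f i).
  by apply/injectiveP => /leq_card; rewrite card_ord ltnn.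
have [lt_ij|lt_ji|eq_ij] := ltngtP i j.
- by exists i, j.
- by exists j, i.
- by case: neq_ij; apply: val_inj.
Qed.

(* If a finite set [T] is covered by [d] "translates" of the image of
   [F : T -> T] and every fibre of [F] has more than [d] elements, then [T] is
   empty: |T| <= d |im F| < (d+1) |im F| <= |T| otherwise. *)
Lemma covered_by_image_with_big_fibres (T : finType) (F : T -> T) (d : nat)
    (shift : 'I_d -> T -> T) :
  (forall i, exists t a, i = shift t (F a)) ->
  (forall a, exists e : 'I_d.+1 -> T, injective e /\ forall l, F (e l) = F a) ->
  #|T| = 0.
Proof.
move=> cover fibre; pose Im := [set F a | a in T].
have le_T_Im : #|T| <= d * #|Im|.
  have sub : [set: T] \subset [set shift p.1 p.2 | p in finset.setX [set: 'I_d] Im].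
    apply/fintype.subsetP => i _; have [t [a ->]] := cover i.
    by apply/imsetP; exists (t, F a); rewrite // finset.in_setX finset.in_setT imset_f.
  rewrite -cardsT (leq_trans (subset_leq_card sub)) // (leq_trans (leq_imset_card _ _)) //.
  by rewrite finset.cardsX cardsT card_ord.
have le_Im_T : #|Im| * d.+1 <= #|T|.
  rewrite -[#|T|]sum1_card (partition_big F (mem Im)) /=; last by move=> i _; exact: imset_f.
  rewrite -sum_nat_const; apply: leq_sum => _ /imsetP [a _ ->]; rewrite sum1_card.
  have [e [inj_e Fe]] := fibre a.
  rewrite -[d.+1]card_ord -(card_imset _ inj_e); apply: subset_leq_card.
  apply/fintype.subsetP => _ /imsetP [l _ ->]; by rewrite unfold_in /= Fe; apply: eqxx.
have [//|/card_gt0P [x _]] := posnP #|T|; exfalso.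
have Im_gt0 : 0 < #|Im| by apply/card_gt0P; exists (F x); exact: imset_f.
have := leq_trans le_Im_T le_T_Im; rewrite mulnC leq_mul2r ltnn orbF.
by move/eqP; move: Im_gt0 => /[swap] ->.
Qed.

Local Open Scope classical_set_scope.

Lemma finite_set_no_injection (T : choiceType) (A : set T) (n : nat) :
  (forall k : 'I_n -> T, (forall i, A (k i)) -> ~ injective k) -> finite_set A.
Proof.
move=> noinj; apply: contrapT => infA.
have [x0 _] : A !=set0 by apply/set0P/eqP => A0; apply: infA; rewrite A0.
have [B BA szB] := infinite_set_fset n infA.
pose k (i : 'I_n) := nth x0 (finmap.enum_fset B) i.
have lt_k (i : 'I_n) : (i < size (finmap.enum_fset B))%N := leq_trans (ltn_ord i) szB.
apply: (noinj k) => [i|i j /eqP]; first by apply: BA; exact: mem_nth.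
by rewrite nth_uniq // => /eqP /val_inj.
Qed.

Lemma normal_shrink_open (T : topologicalType) (A W : set T) :
  normal_space T -> closed A -> open W -> A `<=` W ->
  exists U, [/\ open U, A `<=` U & closure U `<=` W].
Proof.
move=> nT clA oW AW.
have [U nbhsU clUW] : filter_from (set_nbhs A) closure W.
  by apply: (nT A clA W); apply/set_nbhsP; exists W; split.
have /set_nbhsP [C [oC AC CU]] := nbhsU.
by exists C; split => //; apply: subset_trans clUW; exact: closureS.
Qed.

Section QuasiComponent.
Variable T : topologicalType.
Hypotheses (cT : compact [set: T]) (hT : hausdorff_space T).
Variable p : T.

Let Q := \bigcap_(D in [set D : set T | clopen D /\ D p]) D.

Let Qp : Q p. Proof. by move=> D [_ ?]. Qed.

(* By compactness, an open set containing [Q] contains a clopen set containing [p]. *)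
Let clopen_inside (W : set T) : open W -> Q `<=` W ->
  exists D, [/\ clopen D, D p & D `<=` W].
Proof.
move=> oW QW.
have /compact_near_coveringP cover_nW : compact (~` W).
  exact: subclosed_compact (open_closedC oW) cT (subsetT _).
pose F := filter_from [set D : set T | clopen D /\ D p] (fun D => [set E | E `<=` D]).
have FF : Filter F.
  apply: filter_from_filter; first by exists setT; split => //; exact: clopenT.
  move=> A B [cA Ap] [cB Bp]; exists (A `&` B); first by split => //; exact: clopenI.
  by move=> E EAB; split => x /EAB [].
have [x nWx|D [cD Dp] DW] := cover_nW (set T) F (fun E x => ~ E x) FF.
  have [D [cD Dp nDx]] : exists D, [/\ clopen D, D p & ~ D x].
    apply: contrapT => noD; apply: nWx; apply: QW => D [cD Dp].
    by apply: contrapT => nDx; apply: noD; exists D.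
  exists (~` D, [set E | E `<=` D]); first split.
  - by apply: open_nbhs_nbhs; split => //; apply: closed_openC; case: cD.
  - by exists D.
  - by case=> y E [/= nDy ED] /ED.
exists D; split => // y Dy; apply: contrapT => nWy.
exact: DW D (fun z Dz => Dz) y nWy Dy.
Qed.

Let relatively_clopen_full (B Op C : set T) : open Op -> closed C ->
  B = Q `&` Op -> B = Q `&` C -> B p -> B = Q.
Proof.
move=> oOp clC BO BC Bp.
have clQ : closed Q by apply: closed_bigI => D [[_ ?] _].
have [U [oU BU clU_O]] : exists U, [/\ open U, B `<=` U & closure U `<=` ~` (Q `&` ~` Op)].
  apply: normal_shrink_open (compact_normal hT cT) _ _ _.
  - by rewrite BC; exact: closedI.
  - by apply: closed_openC; apply: closedI => //; exact: open_closedC.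
  - by rewrite BO => x [Qx Ox] [_]; apply.
have QUV : Q `<=` U `|` ~` closure U.
  move=> y Qy; have [Oy|nOy] := pselect (Op y); first by left; apply: BU; rewrite BO.
  by right => /clU_O; apply.
have [D [[oD clD] Dp DUV]] := clopen_inside (openU oU (closed_openC (@closed_closure _ U))) QUV.
have DU_clopen : clopen (D `&` U).
  split; first exact: openI.
  have -> : D `&` U = D `&` closure U.
    apply/seteqP; split => x [Dx Ux]; split => //; first exact: subset_closure.
    by case: (DUV x Dx).
  by apply: closedI => //; exact: closed_closure.
have QU : Q `<=` U by move=> y /(_ _ (conj DU_clopen (conj Dp (BU p Bp)))) [].
rewrite BO; apply/seteqP; split => [y [] //|y Qy]; split => //.
apply: contrapT => nOy; apply: (clU_O y) => //; exact/subset_closure/QU.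
Qed.

Let Q_connected : connected Q.
Proof.
move=> B [b Bb] [Op oOp BO] [C clC BC].
have [Bp|nBp] := pselect (B p); first exact: (relatively_clopen_full oOp clC BO BC).
have OC x : Q x -> Op x <-> C x.
  move=> Qx; split => [Ox | Cx].
  - by have : (Q `&` Op) x by []; rewrite -BO BC => -[].
  - by have : (Q `&` C) x by []; rewrite -BC BO => -[].
have QnC : Q `&` ~` C = Q.
  apply: (@relatively_clopen_full _ (~` C) (~` Op)) => //.
  - exact: closed_openC.
  - exact: open_closedC.
  - by apply/seteqP; split => x [Qx nx]; split => // /(OC x Qx).
  - by split => // Cp; apply: nBp; rewrite BC.
have Cb : C b by move: Bb; rewrite BC => -[].
have : Q b by move: Bb; rewrite BO => -[].
by rewrite -QnC => -[].
Qed.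

(* In a compact Hausdorff space the quasi-component of [p] is connected, so it
   lies in the connected component of [p]. *)
Lemma quasi_component_sub_component :
  Q `<=` connected_component [set: T] p.
Proof. exact: connected_component_max Qp (fun _ _ => I) Q_connected. Qed.

End QuasiComponent.

Lemma compact_totally_disconnected_zero_dimensional (T : topologicalType) :
  compact [set: T] -> hausdorff_space T -> totally_disconnected [set: T] ->
  zero_dimensional T.
Proof.
move=> cT hT tdT p x /eqP neq_px; apply: contrapT => no_clopen; apply: neq_px.
suff : connected_component [set: T] p x by rewrite (tdT p I) => ->.
apply: quasi_component_sub_component => // D [clD Dp].
by apply: contrapT => nDx; apply: no_clopen; exists D.
Qed.

Section GroupLaws.
Variable G : topologicalType.
Variables (mul : G -> G -> G) (inv : G -> G) (one : G).
Hypothesis grp : is_group mul inv one.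
Local Notation "x ** y" := (mul x y) (at level 40, left associativity).

Lemma grp_mulA x y z : x ** (y ** z) = x ** y ** z.
Proof. by case: grp. Qed.
Lemma grp_mul1l x : one ** x = x.
Proof. by case: grp. Qed.
Lemma grp_mul1r x : x ** one = x.
Proof. by case: grp. Qed.
Lemma grp_mulVl x : inv x ** x = one.
Proof. by case: grp. Qed.
Lemma grp_mulVr x : x ** inv x = one.
Proof. by case: grp. Qed.
Lemma grp_mulKl x y : inv x ** (x ** y) = y.
Proof. by rewrite grp_mulA grp_mulVl grp_mul1l. Qed.
Lemma grp_mulVKl x y : x ** (inv x ** y) = y.
Proof. by rewrite grp_mulA grp_mulVr grp_mul1l. Qed.
Lemma grp_mulKr x y : x ** y ** inv y = x.
Proof. by rewrite -grp_mulA grp_mulVr grp_mul1r. Qed.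
Lemma grp_mulVKr x y : x ** inv y ** y = x.
Proof. by rewrite -grp_mulA grp_mulVl grp_mul1r. Qed.
Lemma grp_mulIl x y z : x ** y = x ** z -> y = z.
Proof. by move=> e; rewrite -(grp_mulKl x y) e grp_mulKl. Qed.
Lemma grp_inv_uniq x y : x ** y = one -> y = inv x.
Proof. by move=> e; apply: (@grp_mulIl x); rewrite e grp_mulVr. Qed.
Lemma grp_invK x : inv (inv x) = x.
Proof. by rewrite -(grp_inv_uniq (grp_mulVl x)). Qed.
Lemma grp_invM x y : inv (x ** y) = inv y ** inv x.
Proof. by apply/esym/grp_inv_uniq; rewrite grp_mulA grp_mulKr grp_mulVr. Qed.
Lemma grp_inv1 : inv one = one.
Proof. by rewrite -(grp_inv_uniq (grp_mul1l one)). Qed.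

Section SameCoset.
Variable V : set G.
Hypothesis subV : is_subgroup mul inv one V.

Lemma same_coset_sym x y : V (inv x ** y) -> V (inv y ** x).
Proof. by case: subV => _ _ VV /VV; rewrite grp_invM grp_invK. Qed.
Lemma same_coset_trans x y z : V (inv x ** y) -> V (inv y ** z) -> V (inv x ** z).
Proof. by case: subV => _ VM _ /VM /[apply]; rewrite -grp_mulA grp_mulVKl. Qed.
Lemma same_coset_mull g x y : V (inv x ** y) -> V (inv (g ** x) ** (g ** y)).
Proof. by rewrite grp_invM -grp_mulA grp_mulKl. Qed.

End SameCoset.

Lemma normal_subgroupI (M N : set G) : is_normal_subgroup mul inv one M ->
  is_normal_subgroup mul inv one N -> is_normal_subgroup mul inv one (M `&` N).
Proof.
move=> [[M1 MM MV] MJ] [[N1 NM NV] NJ]; split; first split.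
- by [].
- by move=> x y [? ?] [? ?]; split; [exact: MM | exact: NM].
- by move=> x [? ?]; split; [exact: MV | exact: NV].
- by move=> g x [? ?]; split; [exact: MJ | exact: NJ].
Qed.

Section Homomorphisms.
Variable alpha : G -> G.
Hypothesis hom : is_hom mul alpha.

Lemma hom_one : alpha one = one.
Proof.
apply: (@grp_mulIl (alpha one)).
by rewrite -hom !grp_mul1r.
Qed.

Lemma hom_inv x : alpha (inv x) = inv (alpha x).
Proof. by apply: grp_inv_uniq; rewrite -hom grp_mulVr hom_one. Qed.

Lemma hom_iter k : is_hom mul (iter k alpha).
Proof. by elim: k => // k IH x y; rewrite iterS IH hom. Qed.

Lemma hom_kernel_normal : is_normal_subgroup mul inv one (hom_kernel one alpha).
Proof.
rewrite /hom_kernel; split; first split => /=.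
- exact: hom_one.
- by move=> x y; rewrite hom => -> ->; rewrite grp_mul1r.
- by move=> x; rewrite hom_inv => ->; rewrite grp_inv1.
- by move=> g x; rewrite /= !hom hom_inv => ->; rewrite grp_mul1r grp_mulVr.
Qed.

Lemma hom_injective : hom_kernel one alpha = [set one] -> injective alpha.
Proof.
move=> K1 x y exy.
have : hom_kernel one alpha (inv x ** y).
  by rewrite /hom_kernel /= hom hom_inv exy grp_mulVl.
by rewrite K1 => /= e; rewrite -(grp_mul1r x) -e grp_mulVKl.
Qed.

End Homomorphisms.

Lemma agree_mod_normal_subgroup (M : set G) (phi psi : G -> G) :
  is_normal_subgroup mul inv one M -> is_hom mul phi -> is_hom mul psi ->
  is_subgroup mul inv one [set x | M (inv (phi x) ** psi x)].
Proof.
move=> [[M1 MM MV] MJ] hphi hpsi; split => /=.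
- by rewrite (hom_one hphi) (hom_one hpsi) grp_inv1 grp_mul1r.
- move=> x y Mx My; rewrite hphi hpsi.
  have := MM _ _ (MJ (inv (phi y)) _ Mx) My.
  by rewrite grp_invK grp_invM !grp_mulA grp_mulKr.
- move=> x Mx; rewrite (hom_inv hphi) (hom_inv hpsi) grp_invK.
  have := MJ (phi x) _ (MV _ Mx).
  by rewrite grp_invM grp_invK grp_mulA grp_mulKr.
Qed.

End GroupLaws.

Definition coset_cover (G : topologicalType) (mul : G -> G -> G) (inv : G -> G)
  (V : set G) (cs : seq G) : Prop :=
  forall x, exists2 c, c \in cs & V (mul (inv c) x).

Section FiniteQuotient.
Variable G : topologicalType.
Variables (mul : G -> G -> G) (inv : G -> G) (one : G).
Hypothesis grp : is_group mul inv one.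
Local Notation "x ** y" := (mul x y) (at level 40, left associativity).
Variable V : set G.
Hypothesis subV : is_subgroup mul inv one V.

(* A subgroup with finitely many cosets has a finite coset space: a finite type
   [T] with a class map [cls] (surjective, with section [rep]) identifying
   exactly the elements in the same coset.  [T] consists of the positions in
   [cs] of the first representative of each coset. *)
Lemma finite_coset_classifier (cs : seq G) : coset_cover mul inv V cs ->
  exists (T : finType) (cls : G -> T) (rep : T -> G),
    (forall x y, cls x = cls y <-> V (inv x ** y)) /\ cancel rep cls.
Proof.
move=> cover.
pose first_rep x := find (fun c => `[< V (inv c ** x) >]) cs.
have lt_first x : (first_rep x < size cs)%N.
  by rewrite -has_find; have [c ccs Vc] := cover x; apply/hasP; exists c => //; exact/asboolP.
have first_repP x : V (inv (nth one cs (first_rep x)) ** x).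
  by move: (lt_first x); rewrite -has_find => /(nth_find one) /asboolP.
pose cls0 x : 'I_(size cs) := Ordinal (lt_first x).
have cls0P x y : cls0 x = cls0 y <-> V (inv x ** y).
  split => [/(congr1 val) /= exy | Vxy].
    have := first_repP y; rewrite -exy => Vy.
    have h := same_coset_sym grp subV (first_repP x).
    exact: (same_coset_trans grp subV h Vy).
  apply: val_inj; apply: eq_find => c; apply/asboolP/asboolP => Vc.
    exact: (same_coset_trans grp subV Vc Vxy).
  exact: (same_coset_trans grp subV Vc (same_coset_sym grp subV Vxy)).
pose T := {i : 'I_(size cs) | `[< exists x, cls0 x = i >]}.
pose cls x : T := exist _ (cls0 x) (asboolT (ex_intro _ x erefl)).
have clsP x y : cls x = cls y <-> V (inv x ** y).
  by rewrite -cls0P; split => [/(congr1 val) | exy] //; exact: val_inj.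
have rep_ex (i : T) : exists x, cls x = i.
  by case: i => i Pi; have /asboolP [x xi] := Pi; exists x; apply: val_inj.
exists T, cls, (fun i => projT1 (cid (rep_ex i))); split => // i.
exact: projT2 (cid (rep_ex i)).
Qed.

End FiniteQuotient.

Lemma tube_lemma (X Y Z : topologicalType) (h : X -> Y -> Z) (K : set X)
    (O : set Z) (y0 : Y) :
  compact K -> open O -> continuous (fun p : X * Y => h p.1 p.2) ->
  (forall u, K u -> O (h u y0)) -> \forall y \near y0, forall u, K u -> O (h u y).
Proof.
move=> /compact_near_coveringP cK oO ch hK.
apply: (cK Y (nbhs y0) (fun y u => O (h u y))) => u Ku.
have : nbhs (u, y0) [set p : X * Y | O (h p.1 p.2)].
  by apply: ch; apply: open_nbhs_nbhs; split => //; exact: hK.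
by [].
Qed.

Section TopologicalGroup.
Variable G : topologicalType.
Variables (mul : G -> G -> G) (inv : G -> G) (one : G).
Hypothesis TG : is_topological_group mul inv one.
Local Notation "x ** y" := (mul x y) (at level 40, left associativity).

Let grp : is_group mul inv one. Proof. by case: TG. Qed.

Lemma continuous_gmul (X : topologicalType) (f g : X -> G) :
  continuous f -> continuous g -> continuous (fun x => f x ** g x).
Proof.
case: TG => _ cmul _ cf cg x.
by apply: continuous2_cvg; [exact: (cmul (f x, g x)) | exact: cf | exact: cg].
Qed.

Lemma continuous_ginv (X : topologicalType) (f : X -> G) :
  continuous f -> continuous (fun x => inv (f x)).
Proof. by case: TG => _ _ cinv cf x; apply: continuous_comp; [exact: cf | exact: cinv]. Qed.

Lemma continuous_lmul (a : G) : continuous (fun x => a ** x).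
Proof. by apply: continuous_gmul; [exact: cst_continuous | move=> x]. Qed.

(* A subgroup which is a neighbourhood of [one] is open: translate by its elements. *)
Lemma nbhs_subgroup_open (W : set G) :
  is_subgroup mul inv one W -> nbhs one W -> open W.
Proof.
move=> [_ WM _] nW; rewrite openE => x Wx.
have : nbhs x [set z | W (inv x ** z)] by apply: continuous_lmul; rewrite /= (grp_mulVl grp).
by apply: filterS => z /(WM _ _ Wx); rewrite (grp_mulVKl grp).
Qed.

(* An open subgroup is closed: its complement is a union of open cosets. *)
Lemma open_subgroup_closed (V : set G) :
  is_subgroup mul inv one V -> open V -> closed V.
Proof.
move=> [V1 VM VV] oV; rewrite -[V]setCK; apply: open_closedC.
rewrite openE => y nVy.
have : nbhs y [set z | V (inv y ** z)].
  by apply: continuous_lmul; apply: open_nbhs_nbhs; split => //; rewrite /= (grp_mulVl grp).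
apply: filterS => z /= Vyz Vz; apply: nVy.
by have := VM _ _ Vz (VV _ Vyz); rewrite (grp_invM grp) (grp_invK grp) (grp_mulVKl grp).
Qed.

Section Compact.
Hypothesis cG : compact [set: G].

(* In a compact group, every clopen neighbourhood [U] of [one] contains an open
   subgroup, namely the set of [g] such that right translation by [g]
   preserves [U]. *)
Lemma open_subgroup_in_clopen (U : set G) : clopen U -> U one ->
  exists W, [/\ is_subgroup mul inv one W, open W & W `<=` U].
Proof.
move=> [oU clU] U1.
pose W := [set g | forall u, U u <-> U (u ** g)].
have subW : is_subgroup mul inv one W.
  split => [u | x y Wx Wy u | x Wx u]; first by rewrite (grp_mul1r grp).
    by rewrite (Wx u) (Wy (u ** x)) (grp_mulA grp).
  by rewrite (Wx (u ** inv x)) (grp_mulVKr grp).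
exists W; split => //; last by move=> g /(_ one) [+ _]; rewrite (grp_mul1l grp); apply.
have cmul : continuous (fun p : G * G => p.1 ** p.2) by case: TG.
have mul_one (A : set G) u : A u -> A (u ** one) by rewrite (grp_mul1r grp).
have inU := tube_lemma (subclosed_compact clU cG (subsetT U)) oU cmul (mul_one U).
have outU := tube_lemma (subclosed_compact (open_closedC oU) cG (subsetT _))
  (closed_openC clU) cmul (mul_one (~` U)).
apply: nbhs_subgroup_open => //; near=> g => u; split => [Uu | Uug].
  exact: (near inU g).
by apply: contrapT => nUu; exact: (near outU g) u nUu Uug.
Unshelve. all: by end_near.
Qed.

(* In a compact group, every open subgroup [V] contains an open normal
   subgroup, namely the intersection of the conjugates of [V]. *)
Lemma open_normal_core (V : set G) : is_subgroup mul inv one V -> open V ->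
  exists N, [/\ is_normal_subgroup mul inv one N, open N & N `<=` V].
Proof.
move=> [V1 VM VV] oV.
pose N := [set g | forall x, V (x ** g ** inv x)].
have subN : is_subgroup mul inv one N.
  split => [x | a b Na Nb x | a Na x] /=.
  - by rewrite (grp_mul1r grp) (grp_mulVr grp).
  - by have := VM _ _ (Na x) (Nb x); rewrite -!(grp_mulA grp) (grp_mulKl grp).
  - by have := VV _ (Na x); rewrite !(grp_invM grp) (grp_invK grp) (grp_mulA grp).
exists N; split.
- split => // g x Nx y.
  by have := Nx (y ** g); rewrite (grp_invM grp) !(grp_mulA grp).
- apply: nbhs_subgroup_open => //.
  have cconj : continuous (fun p : G * G => p.1 ** p.2 ** inv p.1).
    apply: (continuous_gmul (f := fun p : G * G => p.1 ** p.2)); first by case: TG.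
    by apply: continuous_ginv => p; exact: cvg_fst.
  have conj1 u : [set: G] u -> V (u ** one ** inv u).
    by rewrite (grp_mul1r grp) (grp_mulVr grp).
  have := @tube_lemma _ _ _ (fun u g => u ** g ** inv u) _ _ one cG oV cconj conj1.
  by apply: filterS => g Vg x; exact: Vg.
- by move=> g /(_ one); rewrite (grp_mul1l grp) (grp_inv1 grp) (grp_mul1r grp).
Qed.

Lemma open_subgroup_coset_cover (V : set G) : is_subgroup mul inv one V -> open V ->
  exists cs, coset_cover mul inv V cs.
Proof.
move=> [V1 _ _] oV; move/compact_near_coveringP: cG => cover_G.
pose F := filter_from [set: seq G] (fun cs : seq G => [set l : seq G | {subset cs <= l}]).
have FF : Filter F.
  apply: filter_from_filter; first by exists [::].
  move=> A B _ _; exists (A ++ B) => // l sub_l; split => z z_in; apply: sub_l;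
    by rewrite mem_cat z_in ?orbT.
have [|cs _ coverF] := cover_G (seq G) F (fun l x => exists2 c, c \in l & V (inv c ** x)) FF.
  move=> x _.
  exists ([set z | V (inv x ** z)], [set l : seq G | {subset [:: x] <= l}]); first split.
  - by apply: continuous_lmul; apply: open_nbhs_nbhs; split => //; rewrite /= (grp_mulVl grp).
  - by exists [:: x].
  - by case=> y l [/= Vxy sub_l]; exists x => //; apply: sub_l; exact: mem_head.
by exists cs => x; exact: (coverF cs (fun z h => h) x I).
Qed.

End Compact.

End TopologicalGroup.

Section ProfiniteGroup.
Variable G : topologicalType.
Variables (mul : G -> G -> G) (inv : G -> G) (one : G).
Hypothesis PG : is_profinite_group mul inv one.
Local Notation "x ** y" := (mul x y) (at level 40, left associativity).
Let TG : is_topological_group mul inv one. Proof. by case: PG. Qed.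
Let grp : is_group mul inv one. Proof. by case: TG. Qed.
Let cG : compact [set: G]. Proof. by case: PG. Qed.

Lemma open_normal_avoiding x : x <> one ->
  exists N, [/\ is_normal_subgroup mul inv one N, open N & ~ N x].
Proof.
move=> x1; case: PG => _ _ hG tdG.
have one_x : one != x by apply/eqP => /esym.
have [U [clU U1 nUx]] := compact_totally_disconnected_zero_dimensional cG hG tdG one_x.
have [W [subW oW WU]] := open_subgroup_in_clopen TG cG clU U1.
have [N [nN oN NW]] := open_normal_core TG cG subW oW.
by exists N; split => // /NW /WU.
Qed.

Lemma open_normal_avoiding_seq (xs : seq G) : (forall x, x \in xs -> x <> one) ->
  exists N, [/\ is_normal_subgroup mul inv one N, open N & forall x, x \in xs -> ~ N x].
Proof.
elim: xs => [|a xs IH] xs1; first by exists setT; split; [| exact: openT |].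
have [M [nM oM Mxs]] := IH (fun x x_in => xs1 x (@mem_behead _ (a :: xs) x x_in)).
have [N [nN oN nNa]] := open_normal_avoiding (xs1 a (mem_head a xs)).
exists (M `&` N); split; [exact: normal_subgroupI | exact: openI |].
by move=> x; rewrite in_cons => /orP [/eqP -> [] | /Mxs nMx []].
Qed.

Lemma open_normal_separating (n : nat) (k : 'I_n -> G) : injective k ->
  exists M, [/\ is_normal_subgroup mul inv one M, open M &
    forall l m, l != m -> ~ M (inv (k l) ** k m)].
Proof.
move=> inj_k.
have k_distinct l m : l != m -> inv (k l) ** k m <> one.
  move=> /eqP neq_lm /(grp_inv_uniq grp); rewrite (grp_invK grp) => e.
  by apply: neq_lm; apply: inj_k.
pose quotients := [seq inv (k p.1) ** k p.2 | p <- enum [pred p : 'I_n * 'I_n | p.1 != p.2]].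
have [M [nM oM avoidM]] : exists M, [/\ is_normal_subgroup mul inv one M, open M
    & forall x, x \in quotients -> ~ M x].
  apply: (@open_normal_avoiding_seq quotients) => x /mapP [p].
  by rewrite mem_enum => /k_distinct + ->.
exists M; split => // l m neq_lm; apply: avoidM.
by apply/mapP; exists (l, m); rewrite ?mem_enum.
Qed.

End ProfiniteGroup.

Lemma closed_subgroup_generators_full (G : topologicalType) (mul : G -> G -> G)
    (inv : G -> G) (one : G) (S E : set G) :
  closure (generated_subgroup mul inv one S) = [set: G] ->
  is_subgroup mul inv one E -> closed E -> S `<=` E -> forall x, E x.
Proof.
move=> denseS subE clE SE x.
have : closure (generated_subgroup mul inv one S) x by rewrite denseS.
rewrite (closure_id E).1 //; apply: closureS => y; exact.
Qed.

Section InvariantSubgroup.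
Variable G : topologicalType.
Variables (mul : G -> G -> G) (inv : G -> G) (one : G).
Hypothesis TG : is_topological_group mul inv one.
Hypothesis cG : compact [set: G].
Local Notation "x ** y" := (mul x y) (at level 40, left associativity).
Let grp : is_group mul inv one. Proof. by case: TG. Qed.

Variable alpha : G -> G.
Hypotheses (hom_alpha : is_hom mul alpha) (cont_alpha : continuous alpha).

Lemma continuous_iter k : continuous (iter k alpha).
Proof.
elim: k => [|k IH] x; first exact: cvg_id.
by apply: continuous_comp; [exact: IH | exact: cont_alpha].
Qed.

(* If [G] is topologically finitely generated and [M] is an open normal
   subgroup, two distinct iterates of [alpha] agree modulo [M]: the finitely
   many generators have finitely many [M]-classes, so some [alpha^i] and
   [alpha^j], [i < j], agree modulo [M] on them, and the elements where they
   agree form a closed subgroup. *)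
Lemma iterates_agree_mod (M : set G) :
  topologically_finitely_generated mul inv one ->
  is_normal_subgroup mul inv one M -> open M ->
  exists i j, (i < j)%N /\ forall x, M (inv (iter i alpha x) ** iter j alpha x).
Proof.
move=> [S [finS denseS]] nM oM; have [subM _] := nM.
have [cs cover] := open_subgroup_coset_cover TG cG subM oM.
have [T [cls [_ [clsP _]]]] := finite_coset_classifier grp subM cover.
have [X SX] := finite_fsetP.1 finS; pose gens := finmap.enum_fset X.
have [i [j [lt_ij eq_ij]]] := fun_nat_repeats
  (fun k => [ffun t : 'I_(size gens) => cls (iter k alpha (nth one gens t))]).
exists i, j; split => //.
apply: (closed_subgroup_generators_full denseS
  (agree_mod_normal_subgroup grp nM (hom_iter hom_alpha i) (hom_iter hom_alpha j))).
- apply: (@preimage_closed _ _ (fun y => inv (iter i alpha y) ** iter j alpha y));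
    last exact: (open_subgroup_closed TG subM oM).
  move=> y _; exact: (continuous_gmul TG (continuous_ginv TG (@continuous_iter i))
                                           (@continuous_iter j)).
- move=> s; rewrite SX => s_in /=.
  have lt_s : (index s gens < size gens)%N by rewrite index_mem.
  have := congr1 (fun f : {ffun 'I_(size gens) -> T} => f (Ordinal lt_s)) eq_ij.
  by rewrite !ffunE /= nth_index // => /clsP.
Qed.

(* Every open normal subgroup [M] of a topologically finitely generated [G]
   contains an open subgroup [N] with [alpha N `<=` N]: with [i < j] as above,
   [N := \bigcap_(k < j) alpha^-k M] works, since [alpha^j x] lies in
   [alpha^i x M]. *)
Lemma invariant_open_subgroup (M : set G) :
  topologically_finitely_generated mul inv one ->
  is_normal_subgroup mul inv one M -> open M ->
  exists N, [/\ is_subgroup mul inv one N, open N, N `<=` M &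
    forall x, N x -> N (alpha x)].
Proof.
move=> fgG nM oM; have [[M1 MM MV] _] := nM.
have [i [j [lt_ij agree]]] := iterates_agree_mod fgG nM oM.
pose N := [set x | forall k, (k < j)%N -> M (iter k alpha x)].
exists N; split.
- split => [k _ | x y Nx Ny k lt_kj | x Nx k lt_kj].
  + by rewrite (hom_one grp (hom_iter hom_alpha k)).
  + by rewrite (hom_iter hom_alpha); apply: MM; [exact: Nx | exact: Ny].
  + by rewrite (hom_inv grp (hom_iter hom_alpha k)); apply: MV; exact: Nx.
- rewrite openE => x Nx.
  have : \forall y \near x, forall k : 'I_j, M (iter k alpha y).
    apply: filter_forall => k; apply: (@continuous_iter k).
    by apply: open_nbhs_nbhs; split => //; exact: Nx.
  by apply: filterS => y My k lt_kj; exact: (My (Ordinal lt_kj)).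
- by move=> x Nx; exact: (Nx 0%N (leq_ltn_trans (leq0n i) lt_ij)).
- move=> x Nx k; rewrite -iterSr leq_eqVlt => /orP [/eqP eq_k1j | lt_k1j]; last exact: Nx.
  have := MM _ _ (Nx i lt_ij) (agree x).
  by rewrite eq_k1j (grp_mulVKl grp).
Qed.

End InvariantSubgroup.

Lemma finite_index_coset_cover (G : topologicalType) (mul : G -> G -> G)
    (inv : G -> G) (one : G) (H : set G) :
  is_group mul inv one -> is_subgroup mul inv one H -> finite_index mul H ->
  exists gs, coset_cover mul inv H gs.
Proof.
move=> grp [H1 _ _] /finite_fsetP [Y cosetsY].
pose rep (C : set G) := xget one (fun g => C = lcoset mul g H).
exists (map rep (finmap.enum_fset Y)) => x.
have Yx : lcoset mul x H \in finmap.enum_fset Y.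
  have : [set lcoset mul g H | g in [set: G]] (lcoset mul x H) by exists x.
  by rewrite cosetsY.
set c := rep (lcoset mul x H).
have xH_cH : lcoset mul x H = lcoset mul c H.
  by rewrite /c /rep; case: xgetP => [g _ //| /(_ x)].
exists c; first exact: map_f.
have : lcoset mul c H x by rewrite -xH_cH; exists one => //; exact: (grp_mul1r grp).
by case=> h Hh <-; rewrite (grp_mulKl grp).
Qed.

Section KernelBound.
Variable G : topologicalType.
Variables (mul : G -> G -> G) (inv : G -> G) (one : G).
Hypothesis PG : is_profinite_group mul inv one.
Hypothesis fgG : topologically_finitely_generated mul inv one.
Local Notation "x ** y" := (mul x y) (at level 40, left associativity).
Let TG : is_topological_group mul inv one. Proof. by case: PG. Qed.
Let grp : is_group mul inv one. Proof. by case: TG. Qed.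
Let cG : compact [set: G]. Proof. by case: PG. Qed.

Variables (H : set G) (alpha : G -> G).
Hypothesis epi : is_epimorphism_onto mul alpha H.
Variable gs : seq G.
Hypothesis coverH : coset_cover mul inv H gs.

(* Given [size gs + 1]
   distinct kernel elements [k_l], choose an open normal [M] separating them
   and an [alpha]-invariant open subgroup [N] of [M]; [alpha] induces a map [F]
   on the finite coset space [G/N].  Each fibre of [F] contains the [size gs + 1]
   distinct classes of [x k_l], while [G/N] is covered by the [size gs]
   translates [c (im F)], [c \in gs], since [alpha] maps onto [H]: counting
   shows [G/N] is empty, which is absurd. *)
Lemma kernel_bound (k : 'I_(size gs).+1 -> G) :
  (forall l, alpha (k l) = one) -> ~ injective k.
Proof.
move=> Kk inj_k; case: epi => hom_alpha cont_alpha imH.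
have [M [nM oM kM]] := open_normal_separating PG inj_k.
have [N [subN oN NM alphaN]] := invariant_open_subgroup TG cG hom_alpha cont_alpha fgG nM oM.
have [cs coverN] := open_subgroup_coset_cover TG cG subN oN.
have [T [cls [rep [clsP repK]]]] := finite_coset_classifier grp subN coverN.
have cls_mul g x y : cls x = cls y -> cls (g ** x) = cls (g ** y).
  by move=> /clsP Nxy; apply/clsP; exact: (same_coset_mull grp).
have cls_alpha x y : cls x = cls y -> cls (alpha x) = cls (alpha y).
  by move=> /clsP /alphaN; rewrite hom_alpha (hom_inv grp hom_alpha) => /clsP.
suff : #|T| = 0 by move/card0_eq/(_ (cls one)); rewrite inE.
apply: (@covered_by_image_with_big_fibres T (fun a => cls (alpha (rep a))) (size gs)
  (fun t b => cls (nth one gs t ** rep b))) => [i | a].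
- (* [rep i = c ** alpha y] with [c \in gs], as [alpha] maps onto [H]. *)
  have [c c_in] := coverH (rep i); rewrite -imH => -[y _ alpha_y].
  have lt_c : (index c gs < size gs)%N by rewrite index_mem.
  exists (Ordinal lt_c), (cls y) => /=; rewrite nth_index //.
  rewrite -{1}(repK i) -[rep i](grp_mulVKl grp c) -alpha_y; apply: cls_mul.
  by rewrite repK; apply: cls_alpha; rewrite repK.
- (* The classes of [rep a ** k l] are distinct and all lie over [F a]. *)
  exists (fun l => cls (rep a ** k l)); split => [l m /clsP | l /=].
    rewrite (grp_invM grp) -!(grp_mulA grp) (grp_mulKl grp) => /NM Mlm.
    by apply/eqP; apply: contraT => neq_lm; case: (kM _ _ neq_lm Mlm).
  by rewrite (cls_alpha _ _ (repK _)) hom_alpha Kk (grp_mul1r grp).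
Qed.

End KernelBound.

Unset Implicit Arguments.
Set Strict Implicit.

Theorem proposition3p2 (G : topologicalType) (mul : G -> G -> G) (inv : G -> G)
    (one : G) (H : set G) (alpha : G -> G) :
  is_profinite_group mul inv one ->
  topologically_finitely_generated mul inv one ->
  is_subgroup mul inv one H ->
  finite_index mul H ->
  is_epimorphism_onto mul alpha H ->
  finite_set (hom_kernel one alpha) /\
  (no_nontrivial_finite_normal_subgroup mul inv one -> injective alpha).
Proof.
move=> PG fgG subH finH epi.
have grp : is_group mul inv one by case: PG => -[].
have [gs coverH] := finite_index_coset_cover grp subH finH.
have finK : finite_set (hom_kernel one alpha).
  exact: finite_set_no_injection (kernel_bound PG fgG epi coverH).
have [hom_alpha _ _] := epi.
split => // noN; apply: (hom_injective grp hom_alpha).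
exact: noN _ (hom_kernel_normal grp hom_alpha) finK.
Qed.
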